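(* Let $R$ be a ring, $\mathfrak{M}$ a formation of $R$-modules, $G$ a group and $A$ an $RG$-module. Then $\mathbf{Coc}_{\mathfrak{M}}(G) = \{x \in G \mid A/C_A(x) \in \mathfrak{M}\}$ is a normal subgroup of $G$.
   Context: A class $\mathfrak{M}$ of $R$-modules (closed under isomorphism) is a formation if: (F1) whenever $A \in \mathfrak{M}$ and $B$ is an $R$-submodule of $A$, $A/B \in \mathfrak{M}$; (F2) whenever $A$ is an $R$-module and $B_1,\dots,B_k$ are submodules with $A/B_j \in \mathfrak{M}$ for all $j$, then $A/(B_1\cap\dots\cap B_k) \in \mathfrak{M}$. For $x \in G$, $C_A(x) = \{a\in A \mid ax = a\}$. *)

From HB Require Import structures.
From mathcomp Require Import all_boot all_order all_algebra.
Set Implicit Arguments. Unset Strict Implicit. Unset Printing Implicit Defensive.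
Import GRing.Theory.
Local Open Scope ring_scope.

Definition modclass (R : pzRingType) := lmodType R -> Prop.

Definition submodule (R : pzRingType) (V : lmodType R) (B : V -> Prop) : Prop :=
  [/\ B 0, (forall a b, B a -> B b -> B (a + b)) & (forall (r : R) a, B a -> B (r *: a))].

Definition mod_iso (R : pzRingType) (V W : lmodType R) : Prop :=
  exists f : {linear V -> W}, bijective f.

(* The quotient module V/B belongs to the class M (up to isomorphism):
   V/B is realized as any module Q with a surjective R-linear map V -> Q
   whose kernel is exactly B. *)
Definition quot_in (R : pzRingType) (M : modclass R) (V : lmodType R)
    (B : V -> Prop) : Prop :=
  exists (Q : lmodType R) (f : {linear V -> Q}),
    [/\ (forall q : Q, exists v, f v = q), (forall v, f v = 0 <-> B v) & M Q].

Definition formation (R : pzRingType) (M : modclass R) : Prop :=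
  [/\ (forall V W : lmodType R, mod_iso V W -> M V -> M W),
      (* F1 *)
      (forall (V : lmodType R) (B : V -> Prop), M V -> submodule B -> quot_in M B)
    & (* F2 *)
      (forall (V : lmodType R) (k : nat) (B : 'I_k -> V -> Prop),
         (forall j, submodule (B j)) -> (forall j, quot_in M (B j)) ->
         quot_in M (fun v => forall j, B j v))].

Definition RG_action (R : pzRingType) (G : groupType) (A : lmodType R)
    (act : A -> G -> A) : Prop :=
  [/\ (forall x a b, act (a + b) x = act a x + act b x),
      (forall x (r : R) a, act (r *: a) x = r *: act a x),
      (forall a, act a 1%g = a)
    & (forall a x y, act (act a x) y = act a (x * y)%g)].

Definition centA (R : pzRingType) (G : groupType) (A : lmodType R)
    (act : A -> G -> A) (x : G) : A -> Prop := fun a => act a x = a.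

Definition Coc (R : pzRingType) (M : modclass R) (G : groupType) (A : lmodType R)
    (act : A -> G -> A) : G -> Prop := fun x => quot_in M (centA act x).

Definition normal_subgroup (G : groupType) (H : G -> Prop) : Prop :=
  [/\ H 1%g, (forall x y, H x -> H y -> H (x * y)%g),
      (forall x, H x -> H (x^-1)%g)
    & (forall x g, H x -> H (x ^ g)%g)].

(* The conditions A/C_A(x) ∈ M are closed under the group operations because
   C_A(1) = A, C_A(x) ∩ C_A(y) ⊆ C_A(xy), C_A(x^-1) = C_A(x), and
   C_A(x^g) = C_A(x) g.  The first case is (F2) for the empty family, the
   second is (F2) for two submodules followed by (F1) applied to the image of
   the larger submodule, and the last two are invariance of quotients under
   isomorphisms, here the linear automorphism a |-> a g^-1 of A. *)
From HB Require Import structures.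
From mathcomp Require Import all_boot all_order all_algebra.
Set Implicit Arguments. Unset Strict Implicit.
Import GRing.Theory.
Local Open Scope ring_scope.

Section QuotIn.
Variables (R : pzRingType) (M : modclass R).

Lemma quot_in_ext (V : lmodType R) (B B' : V -> Prop) :
  (forall v, B v <-> B' v) -> quot_in M B -> quot_in M B'.
Proof.
move=> eqB [Q [f [f_surj f_ker MQ]]]; exists Q, f; split=> // v.
by split=> [/f_ker/eqB|/eqB/f_ker].
Qed.

Lemma quot_in_comp (V W : lmodType R) (h : {linear V -> W}) (B : W -> Prop) :
  (forall w, exists v, h v = w) -> quot_in M B -> quot_in M (fun v => B (h v)).
Proof.
move=> h_surj [Q [f [f_surj f_ker MQ]]]; exists Q, (f \o h)%FUN.
split=> // [q|v]; last exact: f_ker.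
by have [w <-] := f_surj q; have [v <-] := h_surj w; exists v.
Qed.

Hypothesis formM : formation M.

Lemma formation_quot_in_full (V : lmodType R) : quot_in M (fun _ : V => True).
Proof.
have [_ _ F2] := formM.
by apply: quot_in_ext (F2 V 0%N (fun _ _ => True) _ _) => [v|[]|[]].
Qed.

Lemma formation_quot_in_cap (V : lmodType R) (B1 B2 : V -> Prop) :
  submodule B1 -> submodule B2 -> quot_in M B1 -> quot_in M B2 ->
  quot_in M (fun v => B1 v /\ B2 v).
Proof.
have [_ _ F2] := formM => sB1 sB2 MB1 MB2.
pose B (j : 'I_2) := if j == ord0 then B1 else B2.
have sB j : submodule (B j) by rewrite /B; case: ifP.
have MB j : quot_in M (B j) by rewrite /B; case: ifP.
apply: quot_in_ext (F2 V 2 B sB MB) => v; split=> [Bv|[B1v B2v] j].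
- exact: conj (Bv ord0) (Bv ord_max).
- by rewrite /B; case: ifP.
Qed.

(* The image of B2 in the quotient V/B1 is a submodule, to which (F1) applies;
   the corresponding quotient is V/B2 because B1 ⊆ B2. *)
Lemma formation_quot_in_le (V : lmodType R) (B1 B2 : V -> Prop) :
  submodule B2 -> (forall v, B1 v -> B2 v) -> quot_in M B1 -> quot_in M B2.
Proof.
have [_ F1 _] := formM => -[B2_0 B2D B2Z] le_B12 MB1.
have [Q [f [f_surj f_ker MQ]]] := MB1.
pose C (q : Q) := exists2 v, f v = q & B2 v.
have sC : submodule C.
  split.
  - by exists 0; [apply: linear0 | apply: B2_0].
  - move=> _ _ [a <- B2a] [b <- B2b].
    by exists (a + b); [apply: linearD | apply: B2D].
  - by move=> r _ [a <- B2a]; exists (r *: a); [apply: linearZ | apply: B2Z].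
apply: quot_in_ext (quot_in_comp f_surj (F1 Q C MQ sC)) => v.
split=> [[w fwv B2w]|B2v]; last by exists v.
have B1vw : B1 (v - w) by apply/f_ker; rewrite linearB fwv subrr.
by rewrite -(subrK w v); apply: B2D => //; apply: le_B12.
Qed.

End QuotIn.

Section Centralizers.
Local Open Scope group_scope.
Variables (R : pzRingType) (G : groupType) (A : lmodType R) (act : A -> G -> A).
Hypothesis actRG : RG_action act.

Definition act_by (g : G) (a : A) := act a g.

Lemma act_by_is_linear g : linear (act_by g).
Proof. by have [actD actZ _ _] := actRG => r a b; rewrite /act_by actD actZ. Qed.

HB.instance Definition _ g :=
  GRing.isLinear.Build R A A _ (act_by g) (act_by_is_linear g).

Lemma act_by_surj g a : exists b, act_by g b = a.
Proof.
by have [_ _ act1 actM] := actRG; exists (act a g^-1); rewrite /act_by actM mulVg act1.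
Qed.

Lemma centA_submodule x : submodule (centA act x).
Proof.
have [actD actZ _ _] := actRG; split; rewrite /centA.
- by rewrite -(scale0r (0 : A)) actZ !scale0r.
- by move=> a b xa xb; rewrite actD xa xb.
- by move=> r a xa; rewrite actZ xa.
Qed.

Lemma centA1 a : centA act 1 a.
Proof. by have [_ _ act1 _] := actRG; apply: act1. Qed.

Lemma centAM x y a : centA act x a -> centA act y a -> centA act (x * y) a.
Proof. by have [_ _ _ actM] := actRG; rewrite /centA -actM => -> ->. Qed.

Lemma centAV x a : centA act x^-1 a <-> centA act x a.
Proof.
have [_ _ act1 actM] := actRG.
suff centAV_imp y b : centA act y b -> centA act y^-1 b.
  by split=> /centAV_imp; rewrite ?invgK.
by rewrite /centA => yb; rewrite -{1}yb actM mulgV act1.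
Qed.

Lemma centAJ x g a : centA act (x ^ g) a <-> centA act x (act_by g^-1 a).
Proof.
have [_ _ act1 actM] := actRG.
rewrite /centA /act_by conjgE actM; split=> [xga|xa].
  by rewrite -{2}xga actM mulgA mulgK.
by rewrite mulgA -actM xa actM mulVg act1.
Qed.

End Centralizers.

Theorem lemma2p2 (R : pzRingType) (M : modclass R) (G : groupType)
    (A : lmodType R) (act : A -> G -> A) :
  formation M -> RG_action act -> normal_subgroup (Coc M act).
Proof.
move=> formM actRG; have sC := centA_submodule actRG; rewrite /Coc; split.
- apply: quot_in_ext (formation_quot_in_full formM A) => a.
  by split=> // _; apply: centA1.
- move=> x y Mx My.
  have Mxy := formation_quot_in_cap formM (sC x) (sC y) Mx My.
  apply: (formation_quot_in_le formM (sC (x * y)%g) _ Mxy) => a [xa ya].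
  exact: centAM.
- move=> x; apply: quot_in_ext => a.
  exact: iff_sym (centAV actRG x a).
- move=> x g Mx; apply: quot_in_ext (quot_in_comp (act_by_surj actRG g^-1) Mx) => a.
  exact: iff_sym (centAJ actRG x g a).
Qed.
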